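(* Let $\hat D$ be any element of the algebra of operators on $C(P)$ generated by $\hat T_1,\dots,\hat T_n$, and let $\lambda,\mu\in P$ with $\lambda\sim\mu$. If $(\hat Df)(\lambda)=0$ for all $f\in C(P)$, then $(\hat Df)(\mu)=0$ for all $f\in C(P)$.
   Context: Let $R$ be an irreducible reduced crystallographic root system of rank $n$ in a Euclidean space $V$ with inner product $\langle\cdot,\cdot\rangle$, $\alpha^\vee:=2\alpha/\langle\alpha,\alpha\rangle$, weight lattice $P$, positive roots $R^+$ with simple roots $\alpha_1,\dots,\alpha_n$, finite Weyl group $W_0$ acting on $C(P)$ (functions $P\to\mathbb C$) by $(wf)(\lambda)=f(w^{-1}\lambda)$. $A:=\{x\in V:0<\langle x,\alpha^\vee\rangle<1\ \forall \alpha\in R^+\}$, $C:=\{x:\langle x,\alpha^\vee\rangle>0\ \forall\alpha\in R^+\}$. For $1\le j\le n$, $s_j$ is the reflection in $V_j:=\{x:\langle x,\alpha_j^\vee\rangle=0\}$, $q_j\in\mathbb R\setminus\{0\}$ are parameters, and $\hat T_j:=q_j+\chi_j(s_j-1)$ where $\chi_j$ multiplies by $\chi_j(\lambda)=q_j$ if $V_j$ separates $\lambda$ and $A$, $1$ if $\lambda\in V_j$, $q_j^{-1}$ otherwise. For $x\in V$, $W_{0,x}$ is the stabilizer of $x$ in $W_0$. Write $x\sim y$ iff $W_{0,x}=W_{0,y}$ and $x,y$ both lie in the closure of the same Weyl chamber $wC$ for some $w\in W_0$. *)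

From HB Require Import structures.
From mathcomp Require Import all_boot all_order all_algebra.
From Stdlib Require Import ClassicalEpsilon.
Set Implicit Arguments. Unset Strict Implicit. Unset Printing Implicit Defensive.
Import Order.TTheory GRing.Theory Num.Theory.
Local Open Scope ring_scope.

Section RootSystems.
Variables (C : numClosedFieldType) (n : nat).
Local Notation V := 'rV[C]_n.

(* Euclidean space V = real vectors of C^n with the standard inner product. *)
Definition dot (x y : V) : C := (x *m y^T) 0 0.
Definition coroot (al : V) : V := (2 / dot al al) *: al.
Definition refl (al x : V) : V := x - dot x (coroot al) *: al.
Definition realv (x : V) : Prop := forall i, x 0 i \is Num.real.
Definition is_int (c : C) : Prop := exists z : int, c = z%:~R.

Definition irreducible_rs (R : seq V) : Prop :=
  forall S : V -> Prop,
    (forall al be, al \in R -> be \in R -> S al -> ~ S be -> dot al be = 0) ->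
    (forall al, al \in R -> S al) \/ (forall al, al \in R -> ~ S al).

Definition is_base (R : seq V) (a : 'I_n -> V) : Prop :=
  (forall i, a i \in R) /\ \rank (\matrix_(i < n) a i) = n /\
  (forall al, al \in R -> exists c : 'I_n -> nat,
      al = \sum_i (c i)%:R *: a i \/ al = - \sum_i (c i)%:R *: a i).

Definition root_system (R : seq V) (a : 'I_n -> V) : Prop :=
  (0 < n)%N /\
  (forall al, al \in R -> realv al /\ al != 0) /\
  (forall al be, al \in R -> be \in R -> refl al be \in R) /\
  (forall al be, al \in R -> be \in R -> is_int (dot be (coroot al))) /\
  (forall al (c : C), al \in R -> c *: al \in R -> c = 1 \/ c = -1) /\
  irreducible_rs R /\ is_base R a.

Definition posroot (R : seq V) (a : 'I_n -> V) (al : V) : Prop :=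
  al \in R /\ exists c : 'I_n -> nat, al = \sum_i (c i)%:R *: a i.

Definition inP (R : seq V) (x : V) : Prop :=
  realv x /\ forall al, al \in R -> is_int (dot x (coroot al)).
Definition Pt (R : seq V) := {x : V | inP R x}.
Definition Func (R : seq V) := Pt R -> C.

Definition inA (R : seq V) (a : 'I_n -> V) (x : V) : Prop :=
  realv x /\ forall al, posroot R a al ->
    0 < dot x (coroot al) /\ dot x (coroot al) < 1.

Definition sepA (R : seq V) (a : 'I_n -> V) (j : 'I_n) (x : V) : Prop :=
  forall y, inA R a y -> dot x (coroot (a j)) * dot y (coroot (a j)) < 0.

Definition chi (R : seq V) (a : 'I_n -> V) (q : 'I_n -> C) (j : 'I_n)
  (l : Pt R) : C :=
  if excluded_middle_informative (sepA R a j (proj1_sig l)) then q j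
  else if dot (proj1_sig l) (coroot (a j)) == 0 then 1 else (q j)^-1.

(* (s_j f)(l) = f (s_j^{-1} l) = f (s_j l); the fallback branch is never
   used when R is a root system (P is W_0-stable). *)
Definition sact (R : seq V) (a : 'I_n -> V) (j : 'I_n) (f : Func R) : Func R :=
  fun l =>
    let y := refl (a j) (proj1_sig l) in
    match excluded_middle_informative (inP R y) with
    | left h => f (exist _ y h)
    | right _ => f l
    end.

Definition That (R : seq V) (a : 'I_n -> V) (q : 'I_n -> C) (j : 'I_n)
  (f : Func R) : Func R :=
  fun l => q j * f l + chi a q j l * (sact a j f l - f l).

Inductive in_opalg (R : seq V) (a : 'I_n -> V) (q : 'I_n -> C) :
  (Func R -> Func R) -> Prop :=
| alg_scal (c : C) : in_opalg a q (fun f l => c * f l)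
| alg_T (j : 'I_n) : in_opalg a q (That a q j)
| alg_add D1 D2 : in_opalg a q D1 -> in_opalg a q D2 ->
    in_opalg a q (fun f l => D1 f l + D2 f l)
| alg_mul D1 D2 : in_opalg a q D1 -> in_opalg a q D2 ->
    in_opalg a q (fun f => D1 (D2 f)).

Inductive inW (R : seq V) : (V -> V) -> Prop :=
| W_id : inW R (fun x => x)
| W_refl al w : al \in R -> inW R w -> inW R (fun x => refl al (w x)).

Definition same_stab (R : seq V) (x y : V) : Prop :=
  forall w, inW R w -> (w x = x <-> w y = y).

Definition Cbar (R : seq V) (a : 'I_n -> V) (x : V) : Prop :=
  realv x /\ forall al, posroot R a al -> 0 <= dot x (coroot al).

Definition in_wCbar (R : seq V) (a : 'I_n -> V) (w : V -> V) (x : V) : Prop :=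
  exists z, Cbar R a z /\ x = w z.

Definition sim (R : seq V) (a : 'I_n -> V) (x y : V) : Prop :=
  same_stab R x y /\
  exists w, inW R w /\ in_wCbar R a w x /\ in_wCbar R a w y.

End RootSystems.

(* Write (x, x') for a pair of weights when x = w λ and x' = w μ for one and
   the same Weyl group element w.  Because W_{0,λ} = W_{0,μ}, this pairing is
   the graph of a partial function, so every f ∈ C(P) has a "transport" g with
   g(x) = f(x') on paired points.  The heart of the proof is that every
   operator D̂ in the algebra generated by the T̂_j respects transports:
   (D̂ g)(x) = (D̂ f)(x') for paired x, x'.  By induction on D̂ it suffices to
   check this for the generators, where it amounts to two facts:
   - s_j maps paired points to paired points (s_j w is again in W_0);
   - χ_j takes the same value at paired points, i.e. ⟨wλ, α_j^∨⟩ and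
     ⟨wμ, α_j^∨⟩ vanish simultaneously (equal stabilisers) and are negative
     simultaneously (λ and μ lie in the closure of the same chamber). *)
From HB Require Import structures.
From mathcomp Require Import all_boot all_order all_algebra ring.
From Stdlib Require Import ClassicalEpsilon ProofIrrelevance.
Import Order.TTheory GRing.Theory Num.Theory.
Set Implicit Arguments. Unset Strict Implicit. Unset Printing Implicit Defensive.
Local Open Scope ring_scope.

Section InnerProduct.
Variables (C : numClosedFieldType) (n : nat).
Implicit Types x y z al : 'rV[C]_n.

Lemma dotE x y : dot x y = \sum_i x 0 i * y 0 i.
Proof. by rewrite /dot !mxE; apply: eq_bigr => i _; rewrite mxE. Qed.

Lemma dotC x y : dot x y = dot y x.
Proof. by rewrite !dotE; apply: eq_bigr => i _; rewrite mulrC. Qed.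

Lemma dotBl x y z : dot (x - y) z = dot x z - dot y z.
Proof. by rewrite !dotE -sumrB; apply: eq_bigr => i _; rewrite !mxE mulrBl. Qed.

Lemma dotZl c x y : dot (c *: x) y = c * dot x y.
Proof. by rewrite !dotE mulr_sumr; apply: eq_bigr => i _; rewrite !mxE mulrA. Qed.

Lemma dotBr x y z : dot z (x - y) = dot z x - dot z y.
Proof. by rewrite !(dotC z) dotBl. Qed.

Lemma dotZr c x y : dot y (c *: x) = c * dot y x.
Proof. by rewrite !(dotC y) dotZl. Qed.

Lemma dotNr x y : dot y (- x) = - dot y x.
Proof. by rewrite -scaleN1r dotZr mulN1r. Qed.

Lemma dot_gt0 x : realv x -> x != 0 -> 0 < dot x x.
Proof.
move=> xreal x_neq0; rewrite dotE.
have [k xk_neq0] : exists k, x 0 k != 0.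
  apply/existsP; apply: contraR x_neq0; rewrite negb_exists => /forallP x0.
  by apply/eqP/rowP => i; rewrite mxE; apply/eqP; rewrite -[_ == _]negbK x0.
have sq i : x 0 i * x 0 i = `|x 0 i| ^+ 2 by rewrite -expr2 real_normK.
rewrite (bigD1 k) //= ltr_wpDr //.
- by apply: sumr_ge0 => i _; rewrite sq exprn_ge0.
- by rewrite sq exprn_gt0 // normr_gt0.
Qed.

Lemma dot_coroot x al : dot x (coroot al) = 2 / dot al al * dot x al.
Proof. by rewrite /coroot dotZr. Qed.

Section PositiveNorm.
Variable al : 'rV[C]_n.
Hypothesis al_gt0 : 0 < dot al al.

Let factor_gt0 : 0 < 2 / dot al al.
Proof. by rewrite divr_gt0. Qed.

Lemma coroot_eq0 x : (dot x (coroot al) == 0) = (dot x al == 0).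
Proof. by rewrite dot_coroot mulf_eq0 (gt_eqF factor_gt0). Qed.

Lemma coroot_lt0 x : (dot x (coroot al) < 0) = (dot x al < 0).
Proof. by rewrite dot_coroot pmulr_rlt0. Qed.

Lemma coroot_ge0 x : (0 <= dot x (coroot al)) = (0 <= dot x al).
Proof. by rewrite dot_coroot pmulr_rge0. Qed.

End PositiveNorm.

Section Reflection.
Variable al : 'rV[C]_n.
Hypothesis al_norm : dot al al != 0.

Lemma coroot_self : dot al (coroot al) = 2.
Proof. by rewrite dot_coroot; field. Qed.

Lemma refl_coroot x : dot (refl al x) (coroot al) = - dot x (coroot al).
Proof. by rewrite /refl dotBl dotZl coroot_self; ring. Qed.

Lemma reflK x : refl al (refl al x) = x.
Proof. by rewrite {1}/refl refl_coroot /refl scaleNr opprK subrK. Qed.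

Lemma refl_dot x y : dot (refl al x) (refl al y) = dot x y.
Proof. by rewrite /refl !dotBl !dotBr !dotZl !dotZr (dotC al y); field. Qed.

Lemma refl_self : refl al al = - al.
Proof. by rewrite /refl coroot_self scaler_nat mulr2n opprD addNKr. Qed.

End Reflection.

Lemma refl_fixE al x : al != 0 -> (refl al x == x) = (dot x (coroot al) == 0).
Proof.
move=> al_neq0; rewrite /refl -subr_eq0 addrAC subrr add0r oppr_eq0 scaler_eq0.
by rewrite (negbTE al_neq0) orbF.
Qed.

End InnerProduct.

Section WeylGroup.
Variables (C : numClosedFieldType) (n : nat).
Variables (R : seq 'rV[C]_n) (a : 'I_n -> 'rV[C]_n).
Implicit Types x y z al be : 'rV[C]_n.

Lemma Pt_inj (x y : Pt R) : proj1_sig x = proj1_sig y -> x = y.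
Proof.
case: x y => [x hx] [y hy] /= exy; subst y.
by rewrite (proof_irrelevance _ hx hy).
Qed.

Lemma inW_comp w1 w2 : inW R w1 -> inW R w2 -> inW R (fun x => w1 (w2 x)).
Proof. by move=> w1W w2W; elim: w1W => [|al w alR _ IH] //; apply: W_refl. Qed.

Lemma inW_refl al : al \in R -> inW R (refl al).
Proof. by move=> alR; apply: (W_refl alR (W_id R)). Qed.

Hypothesis hR : root_system R a.

Lemma root_real_neq0 al : al \in R -> realv al /\ al != 0.
Proof. by have [_ [h _]] := hR; apply: h. Qed.

Lemma root_neq0 al : al \in R -> al != 0.
Proof. by move=> /root_real_neq0 []. Qed.

Lemma root_norm_gt0 al : al \in R -> 0 < dot al al.
Proof. by move=> /root_real_neq0 [alreal al_neq0]; apply: dot_gt0. Qed.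

Lemma root_norm_neq0 al : al \in R -> dot al al != 0.
Proof. by move=> /root_norm_gt0 /gt_eqF ->. Qed.

Lemma refl_root al be : al \in R -> be \in R -> refl al be \in R.
Proof. by have [_ [_ [h _]]] := hR; apply: h. Qed.

Lemma neg_root be : be \in R -> - be \in R.
Proof. by move=> beR; rewrite -refl_self ?root_norm_neq0 // refl_root. Qed.

Lemma simple_root j : a j \in R.
Proof. by have [_ [_ [_ [_ [_ [_ [h _]]]]]]] := hR; apply: h. Qed.

Lemma simple_posroot j : posroot R a (a j).
Proof.
split; first exact: simple_root.
exists (fun i => nat_of_bool (i == j)).
rewrite (bigD1 j) //= eqxx scale1r big1 ?addr0 // => i /negbTE ->.
by rewrite scale0r.
Qed.

Lemma root_decomp be : be \in R -> exists c : 'I_n -> nat,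
  be = \sum_i (c i)%:R *: a i \/ be = - \sum_i (c i)%:R *: a i.
Proof. by have [_ [_ [_ [_ [_ [_ [_ [_ h]]]]]]]] := hR; apply: h. Qed.

(* P is stable under the reflections in roots, since ⟨α, β^∨⟩ ∈ ℤ. *)
Lemma refl_weight al x : al \in R -> inP R x -> inP R (refl al x).
Proof.
move=> alR [xreal xint]; have [_ [_ [_ [roots_int _]]]] := hR.
split.
- move=> i; rewrite /refl !mxE rpredB ?rpredM //.
  + by have [z ->] := xint _ alR; apply: realz.
  + exact: (proj1 (root_real_neq0 alR)).
- move=> be beR; rewrite /refl dotBl dotZl.
  have [z1 ->] := xint _ beR; have [z2 ->] := xint _ alR.
  have [z3 ->] := roots_int _ _ beR alR.
  by exists (z1 - z2 * z3); rewrite rmorphB rmorphM.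
Qed.

Lemma inW_inv w : inW R w ->
  exists w', [/\ inW R w', cancel w w' & cancel w' w].
Proof.
elim=> [|al w0 alR _ [w' [w'W wK w'K]]]; first by exists id; split; [apply: W_id|..].
exists (fun x => w' (refl al x)); split; first exact: inW_comp w'W (inW_refl alR).
- by move=> x; rewrite reflK ?root_norm_neq0 ?wK.
- by move=> x; rewrite w'K reflK ?root_norm_neq0.
Qed.

Lemma inW_dot w x y : inW R w -> dot (w x) (w y) = dot x y.
Proof. by elim=> [|al w0 alR _ IH] //; rewrite refl_dot ?root_norm_neq0. Qed.

Lemma inW_root w be : inW R w -> be \in R -> w be \in R.
Proof. by move=> wW beR; elim: wW => [|al w0 alR _ IH] //; apply: refl_root. Qed.

Lemma root_sign_Cbar be : be \in R ->
  (forall z, Cbar R a z -> 0 <= dot z be) \/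
  (forall z, Cbar R a z -> dot z be <= 0).
Proof.
move=> beR; have [c [ebe|ebe]] := root_decomp beR.
- left=> z [_ zC]; have be_pos : posroot R a be by split; last exists c.
  by rewrite -coroot_ge0 ?root_norm_gt0 // zC.
- right=> z [_ zC].
  have be_neg : posroot R a (- be) by split; [apply: neg_root | exists c; rewrite ebe opprK].
  by move: (zC _ be_neg); rewrite coroot_ge0 ?root_norm_gt0 ?neg_root // dotNr oppr_ge0.
Qed.

Lemma Cbar_lt0 z z' be : Cbar R a z -> Cbar R a z' -> be \in R ->
  (dot z be == 0) = (dot z' be == 0) -> (dot z be < 0) = (dot z' be < 0).
Proof.
move=> zC z'C beR eq0; case: (root_sign_Cbar beR) => sgn.
- by rewrite !le_gtF ?sgn.
- by rewrite !lt_def !sgn // !andbT !(eq_sym 0) eq0.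
Qed.

(* Equal stabilisers: w λ and w μ lie on the same mirrors, because s_α fixes
   w x iff the conjugate w^{-1} s_α w fixes x. *)
Lemma stab_eq0 l m v al : same_stab R l m -> inW R v -> al \in R ->
  (dot (v l) al == 0) = (dot (v m) al == 0).
Proof.
move=> stab vW alR.
rewrite -!(coroot_eq0 (root_norm_gt0 alR)) -!refl_fixE ?root_neq0 //.
have [v' [v'W vK v'K]] := inW_inv vW.
pose u x := v' (refl al (v x)).
have uW : inW R u by apply: inW_comp v'W (inW_comp (inW_refl alR) vW).
have conj x : (refl al (v x) == v x) = (u x == x).
  by apply/eqP/eqP => fix_x; [rewrite /u fix_x vK | rewrite -{2}fix_x /u v'K].
by rewrite !conj; have [lm ml] := stab u uW; apply/eqP/eqP.
Qed.

Lemma sim_lt0 l m v al : sim R a l m -> inW R v -> al \in R ->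
  (dot (v l) al < 0) = (dot (v m) al < 0).
Proof.
move=> [stab [w [wW [[z [zC el]] [z' [z'C em]]]]]] vW alR; subst l m.
have vwW : inW R (fun x => v (w x)) := inW_comp vW wW.
have [u [uW _ uK]] := inW_inv vwW.
have shift y : dot (v (w y)) al = dot y (u al) by rewrite -{1}(uK al); apply: (inW_dot _ _ vwW).
rewrite !shift; apply: Cbar_lt0 => //; first exact: inW_root.
by rewrite -!shift (stab_eq0 stab vW alR).
Qed.

(* Since the alcove lies on the positive side of V_j, "V_j separates x from A"
   only depends on the sign of ⟨x, α_j⟩. *)
Lemma sepA_iff j x :
  sepA R a j x <-> (forall y, inA R a y -> dot x (a j) < 0).
Proof.
have aj_gt0 := root_norm_gt0 (simple_root j).
split=> sep y yA; have yj_gt0 := proj1 (proj2 yA _ (simple_posroot j));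
  by move: (sep y yA); rewrite pmulr_llt0 // coroot_lt0.
Qed.

Lemma sact_refl j (f : Func R) (x : Pt R) :
  sact a j f x =
  f (exist _ (refl (a j) (proj1_sig x)) (refl_weight (simple_root j) (proj2_sig x))).
Proof.
rewrite /sact; case: excluded_middle_informative => [wt|]; first by congr f; apply: Pt_inj.
by case; apply: refl_weight (simple_root j) (proj2_sig x).
Qed.

End WeylGroup.

Section Transport.
Variables (C : numClosedFieldType) (n : nat).
Variables (R : seq 'rV[C]_n) (a : 'I_n -> 'rV[C]_n).
Hypothesis hR : root_system R a.
Variables l m : 'rV[C]_n.
Hypothesis lm : sim R a l m.

Definition paired (x x' : Pt R) : Prop :=
  exists v, inW R v /\ proj1_sig x = v l /\ proj1_sig x' = v m.

Definition transported (g f : Func R) : Prop :=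
  forall x x', paired x x' -> g x = f x'.

Lemma paired_fun x y1 y2 : paired x y1 -> paired x y2 -> y1 = y2.
Proof.
move=> [v1 [v1W [e1 e1']]] [v2 [v2W [e2 e2']]].
have [v2' [v2'W v2K v2'K]] := inW_inv hR v2W.
have fixl : v2' (v1 l) = l by rewrite -e1 e2 v2K.
have fixm : v2' (v1 m) = m := proj1 (proj1 lm _ (inW_comp v2'W v1W)) fixl.
by apply: Pt_inj; rewrite e1' e2' -{2}fixm v2'K.
Qed.

Definition transport (f : Func R) : Func R := fun x =>
  match excluded_middle_informative (exists x', paired x x') with
  | left ex => f (proj1_sig (constructive_indefinite_description _ ex))
  | right _ => 0
  end.

Lemma transportP f : transported (transport f) f.
Proof.
move=> x x' xx'; rewrite /transport; case: excluded_middle_informative => [ex|]; last first.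
  by case; exists x'.
by case: constructive_indefinite_description => y xy /=; rewrite (paired_fun xy xx').
Qed.

Lemma chi_paired q j x x' : paired x x' -> chi a q j x = chi a q j x'.
Proof.
move=> [v [vW [ex ex']]]; have ajR := simple_root hR j.
have eq0 : (dot (proj1_sig x) (coroot (a j)) == 0) =
           (dot (proj1_sig x') (coroot (a j)) == 0).
  by rewrite !coroot_eq0 ?(root_norm_gt0 hR) // ex ex' (stab_eq0 hR (proj1 lm)).
have sep : sepA R a j (proj1_sig x) <-> sepA R a j (proj1_sig x').
  by rewrite !(sepA_iff hR) ex ex' (sim_lt0 hR lm vW ajR).
rewrite /chi eq0.
case: excluded_middle_informative => sx; case: excluded_middle_informative => sx' //.
- by case: sx'; apply/sep.
- by case: sx; apply/sep.
Qed.

(* s_j maps paired points to paired points, hence preserves transports. *)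
Lemma sact_paired j g f : transported g f -> transported (sact a j g) (sact a j f).
Proof.
move=> gf x x' [v [vW [ex ex']]]; rewrite !(sact_refl hR); apply: gf.
exists (fun y => refl (a j) (v y)); split; first exact: W_refl (simple_root hR j) vW.
by rewrite /= ex ex'.
Qed.

Lemma opalg_transported q D : in_opalg a q D ->
  forall g f, transported g f -> transported (D g) (D f).
Proof.
elim=> [c|j|D1 D2 _ IH1 _ IH2|D1 D2 _ IH1 _ IH2] g f gf x x' xx' /=.
- by rewrite (gf _ _ xx').
- by rewrite /That (gf _ _ xx') (chi_paired q j xx') (sact_paired j gf xx').
- by rewrite (IH1 _ _ gf _ _ xx') (IH2 _ _ gf _ _ xx').
- exact: IH1 (IH2 _ _ gf) _ _ xx'.
Qed.

End Transport.

(* Apply the transport argument at the pair (λ, μ) itself. *)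
Theorem mainTheorem2 (C : numClosedFieldType) (n : nat)
  (R : seq 'rV[C]_n) (a : 'I_n -> 'rV[C]_n) (q : 'I_n -> C) :
  root_system R a ->
  (forall j, q j \is Num.real /\ q j != 0) ->
  forall D : Func R -> Func R, @in_opalg C n R a q D ->
  forall l m : Pt R, sim R a (proj1_sig l) (proj1_sig m) ->
  (forall f : Func R, D f l = 0) ->
  forall f : Func R, D f m = 0.
Proof.
move=> hR _ D hD l m lm Dl0 f.
have lm_paired : paired (proj1_sig l) (proj1_sig m) l m.
  by exists id; split; [apply: W_id |].
have DfD := opalg_transported hR lm hD (transportP hR lm f).
by rewrite -(DfD _ _ lm_paired) Dl0.
Qed.
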